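(* Let $M$ be a free $\mathbb{T}$-module with a finite $\mathbb{T}$-basis, $V$ its associated complex vector space, and $(\cdot,\cdot)$ a bicomplex scalar product on $M$ which is hyperbolic positive and closed on $V$. Then $\{M,(\cdot,\cdot)\}$ is a $\mathbb{T}$-Hilbert space if and only if $V$ with the restriction of $(\cdot,\cdot)$ is a (complex) Hilbert space.
   Context: Bicomplex numbers: $\mathbb{T}=\{z_1+z_2\mathbf{i_2}: z_1,z_2\in\mathbb{C}(\mathbf{i_1})\}$, $\mathbb{C}(\mathbf{i_1})=\{x+y\mathbf{i_1}: x,y\in\mathbb{R}\}$, $\mathbf{i_1}^2=\mathbf{i_2}^2=-1$, $\mathbf{i_1}\mathbf{i_2}=\mathbf{i_2}\mathbf{i_1}=\mathbf{j}$, $\mathbf{j}^2=1$ (commutative). Hyperbolic numbers $\mathbb{D}=\{x+y\mathbf{j}:x,y\in\mathbb{R}\}$. Idempotents $\mathbf{e_1}=(1+\mathbf{j})/2$, $\mathbf{e_2}=(1-\mathbf{j})/2$. Conjugation: $(z_1+z_2\mathbf{i_2})^{\dagger_3}=\overline{z_1}-\overline{z_2}\mathbf{i_2}$. $\mathbb{D}^+=\{a\mathbf{e_1}+b\mathbf{e_2}: a,b\ge 0\}$. $M$ has $\mathbb{T}$-basis $\{\widehat m_1,\dots,\widehat m_n\}$, $V=\{\sum x_l\widehat m_l: x_l\in\mathbb{C}(\mathbf{i_1})\}$; for $\widehat X=\sum x_l\widehat m_l$ with $x_l=x_{1l}\mathbf{e_1}+x_{2l}\mathbf{e_2}$, $x_{kl}\in\mathbb{C}(\mathbf{i_1})$,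 put $\widehat X_{\mathbf{e_k}}=\sum_l x_{kl}\widehat m_l\in V$. A bicomplex scalar product is a map $(\cdot,\cdot):M\times M\to\mathbb{T}$ with: $(\widehat X,\widehat Y_1+\widehat Y_2)=(\widehat X,\widehat Y_1)+(\widehat X,\widehat Y_2)$; $(\widehat X,\alpha\widehat Y)=\alpha(\widehat X,\widehat Y)$ for $\alpha\in\mathbb{T}$; $(\widehat X,\widehat Y)=(\widehat Y,\widehat X)^{\dagger_3}$; $(\widehat X,\widehat X)=0\iff\widehat X=0$. Hyperbolic positive: $(\widehat X,\widehat X)\in\mathbb{D}^+$ for all $\widehat X$. Closed on $V$: $(\widehat X,\widehat Y)\in\mathbb{C}(\mathbf{i_1})$ for $\widehat X,\widehat Y\in V$. For $\widehat Z\in V$, $\|\widehat Z\|=(\widehat Z,\widehat Z)^{1/2}$; for $\widehat X\in M$, $\|\widehat X\|:=\big((\|\widehat X_{\mathbf{e_1}}\|^2+\|\widehat X_{\mathbf{e_2}}\|^2)/2\big)^{1/2}$, and $d(\widehat X,\widehat Y)=\|\widehat X-\widehat Y\|$. $\{M,(\cdot,\cdot)\}$ is called a $\mathbb{T}$-Hilbert space if $M$ is complete with respect to $d$. *)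

From HB Require Import structures.
From mathcomp Require Import all_boot all_order all_algebra.
From mathcomp Require Import complex.
From mathcomp Require Import reals.
Set Implicit Arguments. Unset Strict Implicit. Unset Printing Implicit Defensive.
Import Order.TTheory GRing.Theory Num.Theory.
Local Open Scope ring_scope.

Section Bicomplex.
Variable R : realType.

Notation Ci := (complex R).
Definition ii1 : Ci := Complex 0 1.
Definition cconj (z : Ci) : Ci := conjc z.

(* A bicomplex number z1 + z2 i2 with z1, z2 in C(i1). *)
Record bicomplex := BC { bc1 : Ci; bc2 : Ci }.

Definition bc0 : bicomplex := BC 0 0.
Definition bc_add (x y : bicomplex) : bicomplex :=
  BC (bc1 x + bc1 y) (bc2 x + bc2 y).
Definition bc_mul (x y : bicomplex) : bicomplex :=
  BC (bc1 x * bc1 y - bc2 x * bc2 y) (bc1 x * bc2 y + bc2 x * bc1 y).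
Definition bc_dag3 (x : bicomplex) : bicomplex :=
  BC (cconj (bc1 x)) (- cconj (bc2 x)).

(* Idempotent components: z1 + z2 i2 = (z1 - i1 z2) e1 + (z1 + i1 z2) e2. *)
Definition bc_e1 (x : bicomplex) : Ci := bc1 x - ii1 * bc2 x.
Definition bc_e2 (x : bicomplex) : Ci := bc1 x + ii1 * bc2 x.

Definition in_Dplus (x : bicomplex) : Prop :=
  exists a b : R, 0 <= a /\ 0 <= b /\ bc_e1 x = (a%:C)%C /\ bc_e2 x = (b%:C)%C.

Definition in_Ci (x : bicomplex) : Prop := bc2 x = 0.

(* The free T-module M with T-basis m_1..m_n, realised by coordinates:
   X = sum_l x_l m_l  <->  (x_l)_l : 'I_n -> T. *)
Definition Mod (n : nat) := 'I_n -> bicomplex.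
Definition M_add n (X Y : Mod n) : Mod n := fun l => bc_add (X l) (Y l).
Definition M_opp n (X : Mod n) : Mod n := fun l => BC (- bc1 (X l)) (- bc2 (X l)).
Definition M_scale n (a : bicomplex) (X : Mod n) : Mod n := fun l => bc_mul a (X l).
Definition M_zero n : Mod n := fun _ => bc0.

(* V = { sum_l x_l m_l : x_l in C(i1) }, realised by coordinates 'I_n -> C(i1). *)
Definition Vsp (n : nat) := 'I_n -> Ci.
Definition V_add n (u v : Vsp n) : Vsp n := fun l => u l + v l.
Definition V_opp n (u : Vsp n) : Vsp n := fun l => - u l.
Definition V_scale n (a : Ci) (u : Vsp n) : Vsp n := fun l => a * u l.
Definition V_zero n : Vsp n := fun _ => 0.
Definition V_to_M n (u : Vsp n) : Mod n := fun l => BC (u l) 0.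

Definition M_e1 n (X : Mod n) : Vsp n := fun l => bc_e1 (X l).
Definition M_e2 n (X : Mod n) : Vsp n := fun l => bc_e2 (X l).

Definition bicomplex_scalar_product n (ip : Mod n -> Mod n -> bicomplex) : Prop :=
  [/\ (forall X Y1 Y2, ip X (M_add Y1 Y2) = bc_add (ip X Y1) (ip X Y2)),
      (forall X Y (a : bicomplex), ip X (M_scale a Y) = bc_mul a (ip X Y)),
      (forall X Y, ip X Y = bc_dag3 (ip Y X)) &
      (forall X, ip X X = bc0 <-> X = @M_zero n)].

Definition hyperbolic_positive n (ip : Mod n -> Mod n -> bicomplex) : Prop :=
  forall X, in_Dplus (ip X X).

Definition closed_on_V n (ip : Mod n -> Mod n -> bicomplex) : Prop :=
  forall u v : Vsp n, in_Ci (ip (V_to_M u) (V_to_M v)).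

(* Restriction of (.,.) to V, as a C(i1)-valued map (meaningful under closed_on_V). *)
Definition ip_V n (ip : Mod n -> Mod n -> bicomplex) (u v : Vsp n) : Ci :=
  bc1 (ip (V_to_M u) (V_to_M v)).

(* ||Z|| = (Z,Z)^{1/2} for Z in V ((Z,Z) is a nonnegative real under the
   standing hypotheses; we take the square root of its real part). *)
Definition normV n (ip : Mod n -> Mod n -> bicomplex) (u : Vsp n) : R :=
  Num.sqrt (complex.Re (ip_V ip u u)).

Definition normM n (ip : Mod n -> Mod n -> bicomplex) (X : Mod n) : R :=
  Num.sqrt ((normV ip (M_e1 X) ^+ 2 + normV ip (M_e2 X) ^+ 2) / 2%:R).

Definition distM n ip (X Y : Mod n) : R := normM ip (M_add X (M_opp Y)).
Definition distV n ip (u v : Vsp n) : R := normV ip (V_add u (V_opp v)).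

Definition cauchy_seq (A : Type) (d : A -> A -> R) (s : nat -> A) : Prop :=
  forall eps : R, 0 < eps -> exists N : nat,
    forall p q : nat, (N <= p)%N -> (N <= q)%N -> d (s p) (s q) < eps.
Definition converges_to (A : Type) (d : A -> A -> R) (s : nat -> A) (x : A) : Prop :=
  forall eps : R, 0 < eps -> exists N : nat,
    forall p : nat, (N <= p)%N -> d (s p) x < eps.
Definition complete_wrt (A : Type) (d : A -> A -> R) : Prop :=
  forall s : nat -> A, cauchy_seq d s -> exists x, converges_to d s x.

Definition T_Hilbert n (ip : Mod n -> Mod n -> bicomplex) : Prop :=
  complete_wrt (distM ip).

(* A complex inner product on V (linear in the second argument, as in the
   paper's convention). *)
Definition complex_inner_product n (ipc : Vsp n -> Vsp n -> Ci) : Prop :=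
  [/\ (forall u v1 v2, ipc u (V_add v1 v2) = ipc u v1 + ipc u v2),
      (forall u v (a : Ci), ipc u (V_scale a v) = a * ipc u v),
      (forall u v, ipc u v = cconj (ipc v u)),
      (forall u, 0 <= ipc u u) &
      (forall u, ipc u u = 0 <-> u = @V_zero n)].

Definition complex_norm n (ipc : Vsp n -> Vsp n -> Ci) (u : Vsp n) : R :=
  Num.sqrt (complex.Re (ipc u u)).

Definition complex_Hilbert n (ipc : Vsp n -> Vsp n -> Ci) : Prop :=
  complex_inner_product ipc /\
  complete_wrt (fun u v => complex_norm ipc (V_add u (V_opp v))).

End Bicomplex.

(* The idempotent components X |-> (X_e1, X_e2) identify M with V x V, and
   the norm of M becomes the quadratic mean of the norms of the two
   components.  A quadratic-mean product of a metric space with itself is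
   complete iff the factor is (components are 2-Lipschitz, and the diagonal
   embeds the factor isometrically), so completeness of M and of V are
   equivalent.  The remaining conditions of a complex inner product on V are
   read off the bicomplex axioms, using closedness on V for reality and
   hyperbolic positivity for nonnegativity of (u, u). *)
From mathcomp Require Import all_boot all_order all_algebra.
From mathcomp Require Import complex reals.
From mathcomp Require Import ring lra.
From mathcomp Require Import boolp.
Set Implicit Arguments.
Unset Strict Implicit.
Unset Printing Implicit Defensive.
Import Order.TTheory GRing.Theory Num.Theory.
Local Open Scope ring_scope.

Section QuadraticMean.
Variable R : realType.
Implicit Types a b e : R.

Definition qmean a b : R := Num.sqrt ((a ^+ 2 + b ^+ 2) / 2).

Lemma qmean_ge0 a b : 0 <= qmean a b.
Proof. exact: sqrtr_ge0. Qed.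

Lemma qmean_sqr a b : qmean a b ^+ 2 = (a ^+ 2 + b ^+ 2) / 2.
Proof. by rewrite sqr_sqrtr // divr_ge0 ?addr_ge0 ?sqr_ge0. Qed.

Lemma qmeanii a : 0 <= a -> qmean a a = a.
Proof.
move=> a_ge0; rewrite /qmean; have -> : (a ^+ 2 + a ^+ 2) / 2 = a ^+ 2 by field.
by rewrite sqrtr_sqr ger0_norm.
Qed.

Lemma qmean_ge_l a b : 0 <= a -> a <= 2 * qmean a b.
Proof. have := qmean_sqr a b; have := qmean_ge0 a b; nra. Qed.

Lemma qmean_ge_r a b : 0 <= b -> b <= 2 * qmean a b.
Proof. have := qmean_sqr a b; have := qmean_ge0 a b; nra. Qed.

Lemma qmean_lt a b e : 0 <= a -> 0 <= b -> a < e -> b < e -> qmean a b < e.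
Proof. have := qmean_sqr a b; have := qmean_ge0 a b; nra. Qed.

End QuadraticMean.

Section LipschitzMaps.
Variables (R : realType) (A B : Type) (dA : A -> A -> R) (dB : B -> B -> R).
Variables (f : A -> B) (k : R).
Hypothesis k_gt0 : 0 < k.
Hypothesis f_lipschitz : forall x y, dB (f x) (f y) <= k * dA x y.

Lemma lipschitz_lt x y e : dA x y < e / k -> dB (f x) (f y) < e.
Proof.
move=> lt_d; apply: le_lt_trans (f_lipschitz x y) _.
by rewrite mulrC -ltr_pdivlMr.
Qed.

Lemma cauchy_seq_lipschitz s : cauchy_seq dA s -> cauchy_seq dB (f \o s).
Proof.
move=> s_cauchy e e_gt0; have [N sN] := s_cauchy _ (divr_gt0 e_gt0 k_gt0).
by exists N => p q Np Nq; apply/lipschitz_lt/sN.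
Qed.

Lemma converges_to_lipschitz s x :
  converges_to dA s x -> converges_to dB (f \o s) (f x).
Proof.
move=> s_cvg e e_gt0; have [N sN] := s_cvg _ (divr_gt0 e_gt0 k_gt0).
by exists N => p Np; apply/lipschitz_lt/sN.
Qed.

End LipschitzMaps.

Section IsometricBijection.
Variables (R : realType) (A B : Type) (dA : A -> A -> R) (dB : B -> B -> R).
Variables (f : A -> B) (g : B -> A).
Hypothesis gK : cancel g f.
Hypothesis f_isometry : forall x y, dB (f x) (f y) = dA x y.

Lemma complete_wrt_isometric_bijection : complete_wrt dA <-> complete_wrt dB.
Proof.
have f_lip x y : dB (f x) (f y) <= 1 * dA x y by rewrite f_isometry mul1r.
have g_lip x y : dA (g x) (g y) <= 1 * dB x y by rewrite -f_isometry !gK mul1r.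
split=> [complA s s_cauchy | complB s s_cauchy].
- have [x gs_cvg] := complA _ (cauchy_seq_lipschitz ltr01 g_lip s_cauchy).
  exists (f x); have := converges_to_lipschitz ltr01 f_lip gs_cvg.
  by congr converges_to; apply: funext => p /=; rewrite gK.
- have [y fs_cvg] := complB _ (cauchy_seq_lipschitz ltr01 f_lip s_cauchy).
  exists (g y) => e e_gt0; have [N fsN] := fs_cvg e e_gt0.
  by exists N => p Np; rewrite -f_isometry gK; apply: fsN.
Qed.

End IsometricBijection.

Section QuadraticMeanProduct.
Variables (R : realType) (A : Type) (d : A -> A -> R).
Hypothesis d_ge0 : forall x y, 0 <= d x y.

Definition qmean_dist (x y : A * A) : R := qmean (d x.1 y.1) (d x.2 y.2).

Lemma converges_to_qmean_pair (s : nat -> A * A) x1 x2 :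
  converges_to d (fst \o s) x1 -> converges_to d (snd \o s) x2 ->
  converges_to qmean_dist s (x1, x2).
Proof.
move=> cvg1 cvg2 e e_gt0.
have [N1 sN1] := cvg1 e e_gt0; have [N2 sN2] := cvg2 e e_gt0.
exists (maxn N1 N2) => p; rewrite geq_max => /andP[N1p N2p].
by apply: qmean_lt; [exact: d_ge0 | exact: d_ge0 | exact: sN1 | exact: sN2].
Qed.

Lemma complete_qmean_dist : complete_wrt d <-> complete_wrt qmean_dist.
Proof.
have fst_lip x y : d x.1 y.1 <= 2 * qmean_dist x y by apply: qmean_ge_l.
have snd_lip x y : d x.2 y.2 <= 2 * qmean_dist x y by apply: qmean_ge_r.
have two_gt0 : (0 : R) < 2 by lra.
have diag_lip x y : qmean_dist (x, x) (y, y) <= 1 * d x y.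
  by rewrite mul1r /qmean_dist qmeanii.
split=> [compl s s_cauchy | compl s s_cauchy].
- have [x1 cvg1] := compl _ (cauchy_seq_lipschitz two_gt0 fst_lip s_cauchy).
  have [x2 cvg2] := compl _ (cauchy_seq_lipschitz two_gt0 snd_lip s_cauchy).
  by exists (x1, x2); apply: converges_to_qmean_pair.
- have [x diag_cvg] := compl _ (cauchy_seq_lipschitz ltr01 diag_lip s_cauchy).
  by exists x.1; apply: (converges_to_lipschitz two_gt0 fst_lip diag_cvg).
Qed.

End QuadraticMeanProduct.

Section IdempotentDecomposition.
Variables (R : realType) (n : nat).
Implicit Types (X Y : Mod R n).

Definition idempotent_parts X : Vsp R n * Vsp R n := (M_e1 X, M_e2 X).

(* (x1 + x2)/2 + i1 (x1 - x2)/2 i2 = x1 e1 + x2 e2 *)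
Definition M_of_idempotent_parts (x : Vsp R n * Vsp R n) : Mod R n :=
  fun l => BC ((x.1 l + x.2 l) / 2) (ii1 R * (x.1 l - x.2 l) / 2).

Lemma M_of_idempotent_partsK : cancel M_of_idempotent_parts idempotent_parts.
Proof.
have ii1_sqr : ii1 R ^+ 2 = -1 by exact: sqr_i.
case=> x1 x2; rewrite /idempotent_parts /M_e1 /M_e2 /bc_e1 /bc_e2 /=.
by congr pair; apply: funext => l /=; rewrite !mulrA -expr2 ii1_sqr; field.
Qed.

Lemma M_e1_sub X Y : M_e1 (M_add X (M_opp Y)) = V_add (M_e1 X) (V_opp (M_e1 Y)).
Proof.
by apply: funext => l;
  rewrite /M_e1 /V_add /V_opp /M_add /M_opp /bc_e1 /=; ring.
Qed.

Lemma M_e2_sub X Y : M_e2 (M_add X (M_opp Y)) = V_add (M_e2 X) (V_opp (M_e2 Y)).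
Proof.
by apply: funext => l;
  rewrite /M_e2 /V_add /V_opp /M_add /M_opp /bc_e2 /=; ring.
Qed.

Variable ip : Mod R n -> Mod R n -> bicomplex R.

Lemma distM_qmean X Y :
  distM ip X Y =
  qmean_dist (distV ip) (idempotent_parts X) (idempotent_parts Y).
Proof. by rewrite /distM /normM M_e1_sub M_e2_sub. Qed.

Lemma T_Hilbert_iff_complete_distV : T_Hilbert ip <-> complete_wrt (distV ip).
Proof.
rewrite (complete_qmean_dist (fun u v => sqrtr_ge0 _)).
apply: complete_wrt_isometric_bijection M_of_idempotent_partsK _ => X Y.
by rewrite distM_qmean.
Qed.

End IdempotentDecomposition.

Section RestrictionToV.
Variables (R : realType) (n : nat) (ip : Mod R n -> Mod R n -> bicomplex R).
Implicit Types (u v : Vsp R n).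

Lemma V_to_M_add u v : V_to_M (V_add u v) = M_add (V_to_M u) (V_to_M v).
Proof.
by apply: funext => l;
  rewrite /V_to_M /V_add /M_add /bc_add /= addr0.
Qed.

Lemma V_to_M_scale a v : V_to_M (V_scale a v) = M_scale (BC a 0) (V_to_M v).
Proof.
by apply: funext => l;
  rewrite /V_to_M /V_scale /M_scale /bc_mul /=; congr BC; ring.
Qed.

Hypothesis ip_scalar_product : bicomplex_scalar_product ip.
Hypothesis ip_closed : closed_on_V ip.
Hypothesis ip_pos : hyperbolic_positive ip.

Lemma ip_V_self u : ip (V_to_M u) (V_to_M u) = BC (ip_V ip u u) 0.
Proof. by rewrite /ip_V -(ip_closed u u); case: (ip _ _). Qed.

Lemma ip_V_self_ge0 u : 0 <= ip_V ip u u.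
Proof.
have [a [b [a_ge0 [_ [e1a _]]]]] := ip_pos (V_to_M u).
by move: e1a; rewrite ip_V_self /bc_e1 /= mulr0 subr0 => ->; rewrite ler0c.
Qed.

Lemma ip_V_self_eq0 u : ip_V ip u u = 0 <-> u = @V_zero R n.
Proof.
have [_ _ _ ip_def] := ip_scalar_product.
split=> [u0 | ->].
- have /ip_def M0 : ip (V_to_M u) (V_to_M u) = bc0 R by rewrite ip_V_self u0.
  by apply: funext => l; have := congr1 (fun X => bc1 (X l)) M0.
- by rewrite /ip_V (proj2 (ip_def (@M_zero R n))).
Qed.

Lemma ip_V_complex_inner_product : complex_inner_product (ip_V ip).
Proof.
have [ip_add ip_scale ip_sym _] := ip_scalar_product.
split=> [u v1 v2 | u v a | u v | u | u].
- by rewrite /ip_V V_to_M_add ip_add.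
- by rewrite /ip_V V_to_M_scale ip_scale /= mul0r subr0.
- by rewrite /ip_V ip_sym.
- exact: ip_V_self_ge0.
- exact: ip_V_self_eq0.
Qed.

End RestrictionToV.

Theorem mainTheorem15 (R : realType) (n : nat)
    (ip : Mod R n -> Mod R n -> bicomplex R) :
  bicomplex_scalar_product ip ->
  hyperbolic_positive ip ->
  closed_on_V ip ->
  (T_Hilbert ip <-> complex_Hilbert (ip_V ip)).
Proof.
move=> ip_scalar_product ip_pos ip_closed.
have ip_V_inner :=
  ip_V_complex_inner_product ip_scalar_product ip_closed ip_pos.
rewrite T_Hilbert_iff_complete_distV /complex_Hilbert.
split=> [complV | [_ complV] //].
exact: (conj ip_V_inner complV).
Qed.
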